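(* For every $\epsilon>0$ there is no algorithm (policy) for the DIME problem that guarantees an $n^{-1+\epsilon}$ approximation to $OPT_{full}$. Precisely: for every $\epsilon>0$ and every (possibly randomized) policy for DIME, there exist $n$, an uncertain network on $n$ nodes with parameters $T,K,L$, and a ground-truth network (a realization of the uncertain edges) such that the expected number of influenced nodes at the end of round $T$ obtained by executing the policy when the true network is the ground-truth network is strictly less than $n^{-1+\epsilon}\cdot OPT_{full}$, where $OPT_{full}$ is the maximum expected number of influenced nodes at the end of round $T$ achievable by a policy that knows the ground-truth network.
   Context: An uncertain network is a directed graph $G=(V,E)$ with $|V|=n$, whose edge set is the disjoint union of certain edges $E_c$ and uncertain edges $E_u$; each $e\in E_u$ has an existence probability $u(e)\in[0,1]$ (it exists independently with probability $u(e)$), and each $e\in E$ has a propagation probability $p(e)\in[0,1]$. A ground-truth network is the directed graph obtained by fixing, for each uncertain edge, whether it exists. Influence model: influenced nodes stay influenced forever; at each time step, every influenced node $x$ independently tries to influence each not-yet-influenced out-neighbour $y$ along an existing edge $(x,y)$, succeeding with probability $p(x,y)$; failed attempts are repeated in every subsequent time step. DIME problem: given the uncertain network and integers $T,K,L$, in each of $T$ rounds a policy chooses a set of exactly $K$ nodes, which become influenced with certainty; upon choosing them, the policy observes the true existence of all uncertain edges leaving the chosen nodes; then influence spreads for $L$ time steps according to the influence model (the policy does not observe which nodes get influenced by spread). A policy maps histories (the initial uncertain network, past choices and observations) to the next $K$-node choice. The objective is the expected total number of influenced nodes at the end of round $T$. *)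

From Stdlib Require Import Reals List Arith Lia.
Import ListNotations.
Open Scope R_scope.

(* An instance of DIME: an uncertain network on nodes 0..n-1 together with
   the parameters T, K, L. *)
Record instance := Instance {
  inst_n : nat;
  inst_T : nat;
  inst_K : nat;
  inst_L : nat;
  ec : nat -> nat -> bool;   (* certain edges E_c *)
  eu : nat -> nat -> bool;   (* uncertain edges E_u *)
  u  : nat -> nat -> R;      (* existence probability on E_u *)
  p  : nat -> nat -> R       (* propagation probability on E *)
}.

Definition wf_inst (I : instance) : Prop :=
  (1 <= inst_n I)%nat /\ (inst_K I <= inst_n I)%nat /\
  forall x y,
    (ec I x y = true -> eu I x y = false) /\
    ((ec I x y || eu I x y)%bool = true ->
       (x < inst_n I)%nat /\ (y < inst_n I)%nat /\ 0 <= p I x y <= 1) /\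
    (eu I x y = true -> 0 <= u I x y <= 1).

Definition is_truth (I : instance) (g : nat -> nat -> bool) : Prop :=
  forall x y, (ec I x y = true -> g x y = true) /\
              (g x y = true -> (ec I x y || eu I x y)%bool = true).

Definition valid_choice (n K : nat) (A : list nat) : Prop :=
  NoDup A /\ length A = K /\ Forall (fun x => (x < n)%nat) A.

(* Finitely supported probability distribution over choices. *)
Definition dist := list (list nat * R).

Definition valid_dist (n K : nat) (d : dist) : Prop :=
  Forall (fun aw => valid_choice n K (fst aw) /\ 0 <= snd aw) d /\
  fold_right Rplus 0 (map snd d) = 1.

Definition inb (x : nat) (A : list nat) : bool := existsb (Nat.eqb x) A.

(* Observation after choosing A: existence of every uncertain edge leaving A
   (None for edges that are not observed). *)
Definition observation := nat -> nat -> option bool.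

Definition observe (I : instance) (g : nat -> nat -> bool) (A : list nat)
  : observation :=
  fun x y => if (inb x A && eu I x y)%bool then Some (g x y) else None.

(* History seen by a DIME policy: past choices with their observations.
   A (randomized) policy maps the instance (uncertain network, T, K, L)
   and the history to a distribution over the next choice. *)
Definition history := list (list nat * observation).
Definition policy := instance -> history -> dist.

Definition valid_policy (pol : policy) : Prop :=
  forall I h, wf_inst I -> valid_dist (inst_n I) (inst_K I) (pol I h).

(* Sets of influenced nodes: boolean lists of length n (index = node). *)
Fixpoint all_subsets (n : nat) : list (list bool) :=
  match n with
  | O => [[]]
  | S m => flat_map (fun s => [true :: s; false :: s]) (all_subsets m)
  end.

Definition mem (S : list bool) (y : nat) : bool := nth y S false.

Definition add_choice (n : nat) (S : list bool) (A : list nat) : list bool :=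
  map (fun y => (mem S y || inb y A)%bool) (seq 0 n).

Definition prodR (l : list R) : R := fold_right Rmult 1 l.
Definition sumR (l : list R) : R := fold_right Rplus 0 l.

(* probability that uninfluenced y gets influenced in one time step *)
Definition q (I : instance) (g : nat -> nat -> bool) (S : list bool) (y : nat) : R :=
  1 - prodR (map (fun x => if (mem S x && g x y)%bool then 1 - p I x y else 1)
                 (seq 0 (inst_n I))).

Definition trans (I : instance) (g : nat -> nat -> bool) (S S' : list bool) : R :=
  prodR (map (fun y => if mem S y then (if mem S' y then 1 else 0)
                       else if mem S' y then q I g S y else 1 - q I g S y)
             (seq 0 (inst_n I))).

(* weighted list of states (a finitely supported distribution) *)
Definition sdist := list (list bool * R).

Definition step (I : instance) (g : nat -> nat -> bool) (D : sdist) : sdist :=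
  flat_map (fun sw => map (fun S' => (S', snd sw * trans I g (fst sw) S'))
                          (all_subsets (inst_n I))) D.

Definition expected_size (D : sdist) : R :=
  sumR (map (fun sw => snd sw * INR (length (filter (fun b => b) (fst sw)))) D).

(* [next] gives the distribution of the next choice as a function of the
   past choices (the ground truth is fixed, so observations are determined
   by the choices).  eval r cs D = expected final number of influenced nodes
   with r rounds remaining, past choices cs and current state distribution D. *)
Fixpoint eval (I : instance) (g : nat -> nat -> bool)
    (next : list (list nat) -> dist) (r : nat) (cs : list (list nat)) (D : sdist) : R :=
  match r with
  | O => expected_size D
  | S r' =>
      sumR (map (fun aw =>
        snd aw * eval I g next r' (cs ++ [fst aw])
          (Nat.iter (inst_L I) (step I g)
             (map (fun sw => (add_choice (inst_n I) (fst sw) (fst aw), snd sw)) D)))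
        (next cs))
  end.

Definition value (I : instance) (g : nat -> nat -> bool) (next : list (list nat) -> dist) : R :=
  eval I g next (inst_T I) [] [(repeat false (inst_n I), 1)].

Definition dime_next (pol : policy) (I : instance) (g : nat -> nat -> bool)
  : list (list nat) -> dist :=
  fun cs => pol I (map (fun A => (A, observe I g A)) cs).

Definition full_values (I : instance) (g : nat -> nat -> bool) (v : R) : Prop :=
  exists next : list (list nat) -> dist,
    (forall cs, valid_dist (inst_n I) (inst_K I) (next cs)) /\ v = value I g next.

From Pilot Require Import Defs.
From Stdlib Require Import Reals List Bool Lia Lra ZArith.
Import ListNotations.
Open Scope R_scope.

(* Take [n] nodes, one round choosing one node, one propagation step, and make
   every edge uncertain; the ground truth is a star (all edges leaving a hub
   [h], each propagating with certainty).  Knowing the truth one seeds [h] and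
   influences all [n] nodes.  A policy learns nothing before its only choice,
   so its first-round distribution is the same for every hub; by averaging,
   some hub is chosen with probability at most [1/n], and against that truth
   the policy influences fewer than [2] nodes in expectation, while
   [n^(-1+eps) * n = n^eps > 2] once [n] is large. *)

Lemma sumR_map_plus {A} (f g : A -> R) l :
  sumR (map (fun x => f x + g x) l) = sumR (map f l) + sumR (map g l).
Proof. induction l; simpl; [ring | rewrite IHl; ring]. Qed.

Lemma sumR_map_scal {A} (f : A -> R) c l :
  sumR (map (fun x => c * f x) l) = c * sumR (map f l).
Proof. induction l; simpl; [ring | rewrite IHl; ring]. Qed.

Lemma sumR_exchange {A B} (f : A -> B -> R) l1 l2 :
  sumR (map (fun x => sumR (map (fun y => f x y) l2)) l1) =
  sumR (map (fun y => sumR (map (fun x => f x y) l1)) l2).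
Proof.
  induction l1; simpl.
  - induction l2; simpl; [ring | rewrite <- IHl2; ring].
  - rewrite IHl1, <- sumR_map_plus. reflexivity.
Qed.

Lemma sumR_flat_map_pair {A} (f : list bool -> R) (t u : A -> list bool) l :
  sumR (map f (flat_map (fun s => [t s; u s]) l)) =
  sumR (map (fun s => f (t s) + f (u s)) l).
Proof. induction l; simpl; [ring | rewrite IHl; ring]. Qed.

Lemma sumR_weighted_le {A} (d : list (A * R)) (X : A * R -> R) c :
  Forall (fun aw => 0 <= snd aw) d -> (forall aw, In aw d -> X aw <= c) ->
  sumR (map (fun aw => snd aw * X aw) d) <= c * sumR (map snd d).
Proof.
  induction d as [|[a w] d IH]; simpl; intros Hw HX; [lra |].
  inversion Hw; subst; simpl in *.
  assert (X (a, w) <= c) by auto.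
  assert (sumR (map (fun aw => snd aw * X aw) d) <= c * sumR (map snd d))
    by (apply IH; auto).
  nra.
Qed.

Lemma exists_le_average {A} (f : A -> R) l :
  l <> [] -> exists x, In x l /\ f x * INR (length l) <= sumR (map f l).
Proof.
  induction l as [|x l IH]; intros Hne; [congruence |].
  destruct l as [|y l].
  - exists x. simpl. split; [auto | lra].
  - destruct IH as [z [Hz Hfz]]; [discriminate |].
    change (sumR (map f (x :: y :: l))) with (f x + sumR (map f (y :: l))).
    rewrite length_cons, S_INR.
    destruct (Rle_dec (f x) (f z)).
    + exists x. split; [left; auto |].
      assert (0 <= INR (length (y :: l))) by apply pos_INR. nra.
    + exists z. split; [right; auto | lra].
Qed.

Lemma prodR_map_one (f : nat -> R) l :
  (forall x, In x l -> f x = 1) -> prodR (map f l) = 1.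
Proof.
  induction l; simpl; intros H; [reflexivity |].
  unfold prodR in *; simpl. rewrite IHl, H; auto; ring.
Qed.

Lemma prodR_map_zero (f : nat -> R) l x :
  In x l -> f x = 0 -> prodR (map f l) = 0.
Proof.
  induction l; simpl; intros Hx Hf; [contradiction |].
  unfold prodR in *; simpl.
  destruct Hx as [<- | Hx]; [rewrite Hf; ring | rewrite IHl; auto; ring].
Qed.

Lemma sumR_indicator_count (a : nat) w l :
  sumR (map (fun y => if Nat.eqb a y then w else 0) l) =
  w * INR (length (filter (Nat.eqb a) l)).
Proof.
  induction l as [|y l IH]; simpl; [ring |].
  rewrite IH. destruct (Nat.eqb a y); [rewrite length_cons, S_INR |]; ring.
Qed.

Lemma filter_eqb_not_In (a : nat) l : ~ In a l -> filter (Nat.eqb a) l = [].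
Proof.
  induction l as [|y l IH]; simpl; intros Ha; [reflexivity |].
  destruct (Nat.eqb_spec a y) as [-> | _]; [exfalso; auto | auto].
Qed.

Lemma length_filter_eqb_NoDup (a : nat) l :
  NoDup l -> In a l -> length (filter (Nat.eqb a) l) = 1%nat.
Proof.
  induction l as [|y l IH]; simpl; intros Hl Ha; [contradiction |].
  apply NoDup_cons_iff in Hl as [Hy Hl].
  destruct (Nat.eqb_spec a y) as [-> | Hne].
  - rewrite filter_eqb_not_In; auto.
  - destruct Ha as [-> | Ha]; [congruence | auto].
Qed.

(* A deterministic transition makes [step] a Dirac mass. *)
Lemma sumR_all_subsets_indicator n (b : nat -> bool) (c : list bool -> R) :
  sumR (map (fun s => prodR (map (fun y => if Bool.eqb (mem s y) (b y) then 1 else 0)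
                                 (seq 0 n)) * c s)
            (all_subsets n)) =
  c (map b (seq 0 n)).
Proof.
  revert b c. induction n; intros b c.
  - simpl. unfold prodR. simpl. ring.
  - cbn [all_subsets]. rewrite sumR_flat_map_pair.
    replace (map b (seq 0 (S n)))
      with (b 0%nat :: map (fun y => b (S y)) (seq 0 n))
      by (simpl; rewrite <- seq_shift, map_map; reflexivity).
    rewrite <- (IHn (fun y => b (S y)) (fun s => c (b 0%nat :: s))).
    f_equal. apply map_ext. intros s.
    cbn [seq map prodR fold_right]. rewrite <- seq_shift, !map_map.
    unfold mem; cbn [nth]. fold prodR.
    destruct (b 0%nat); simpl; unfold prodR; ring.
Qed.

Lemma mem_add_choice n S A y :
  (y < n)%nat -> mem (add_choice n S A) y = (mem S y || inb y A)%bool.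
Proof.
  intros Hy. unfold add_choice, mem.
  rewrite (nth_indep _ _ ((fun y => (nth y S false || inb y A)%bool) 0%nat))
    by (rewrite length_map, length_seq; lia).
  rewrite (map_nth (fun y => (nth y S false || inb y A)%bool) (seq 0 n) 0%nat y),
    seq_nth by lia.
  reflexivity.
Qed.

Lemma mem_repeat_false n y : mem (repeat false n) y = false.
Proof. apply nth_repeat. Qed.

Lemma valid_choice_one n A :
  valid_choice n 1 A -> exists a, A = [a] /\ (a < n)%nat.
Proof.
  intros [_ [Hlen Hlt]].
  destruct A as [|a [|b A]]; try discriminate.
  inversion Hlt; subst. eauto.
Qed.

(* On one-node choices [[a]] this is the probability of seeding [h]. *)
Definition choice_weight (d : Defs.dist) (h : nat) : R :=
  sumR (map (fun aw => if Nat.eqb (hd 0%nat (fst aw)) h then snd aw else 0) d).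

Lemma choice_weight_sum n d :
  valid_dist n 1 d -> sumR (map (choice_weight d) (seq 0 n)) = 1.
Proof.
  intros [Hd Hsum]. change (sumR (map snd d) = 1) in Hsum. unfold choice_weight.
  rewrite <- sumR_exchange, <- Hsum. f_equal.
  apply map_ext_in. intros aw Haw. rewrite Forall_forall in Hd.
  destruct (Hd aw Haw) as [Hchoice _].
  destruct (valid_choice_one _ _ Hchoice) as [a [-> Ha]]. cbn [hd].
  rewrite sumR_indicator_count, length_filter_eqb_NoDup.
  - simpl. ring.
  - apply seq_NoDup.
  - apply in_seq. lia.
Qed.

Lemma exists_rare_choice n d :
  (1 <= n)%nat -> valid_dist n 1 d ->
  exists h, (h < n)%nat /\ choice_weight d h <= 1 / INR n.
Proof.
  intros Hn Hd.
  destruct (exists_le_average (choice_weight d) (seq 0 n)) as [h [Hh Hle]].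
  { destruct n; [lia | discriminate]. }
  rewrite choice_weight_sum, length_seq in Hle by exact Hd.
  apply in_seq in Hh. exists h. split; [lia |].
  assert (0 < INR n) by (apply lt_0_INR; lia).
  apply (Rmult_le_reg_r (INR n)); [assumption |].
  replace (1 / INR n * INR n) with 1 by (field; lra). exact Hle.
Qed.

Section Star.

Variable n : nat.

Definition star_instance : instance :=
  Instance n 1 1 1 (fun _ _ => false) (fun x y => (Nat.ltb x n && Nat.ltb y n)%bool)
    (fun _ _ => 1) (fun _ _ => 1).

Definition star_truth (h : nat) : nat -> nat -> bool :=
  fun x y => (Nat.eqb x h && Nat.ltb y n)%bool.

Lemma star_instance_wf : (1 <= n)%nat -> wf_inst star_instance.
Proof.
  intros Hn. unfold wf_inst; cbn. split; [lia | split; [lia |]].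
  intros x y. split; [discriminate |]. split; [| lra].
  intros Hxy. apply andb_true_iff in Hxy as [Hx Hy].
  apply Nat.ltb_lt in Hx, Hy. repeat split; lia || lra.
Qed.

Variable h : nat.
Hypothesis h_lt_n : (h < n)%nat.

Lemma star_truth_is_truth : is_truth star_instance (star_truth h).
Proof.
  intros x y. cbn [ec eu star_instance]. split; [discriminate |].
  unfold star_truth. intros Hxy. apply andb_true_iff in Hxy as [Hx Hy].
  apply Nat.eqb_eq in Hx. subst x.
  apply Nat.ltb_lt in h_lt_n as Hh. rewrite Hh, Hy. reflexivity.
Qed.

Lemma star_q S y :
  (y < n)%nat -> q star_instance (star_truth h) S y = if mem S h then 1 else 0.
Proof.
  intros Hy. unfold q, star_truth. cbn [inst_n p star_instance].
  replace (Nat.ltb y n) with true by (symmetry; apply Nat.ltb_lt; exact Hy).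
  destruct (mem S h) eqn:Eh.
  - rewrite (prodR_map_zero _ _ h); [ring | apply in_seq; lia |].
    rewrite Eh, Nat.eqb_refl. simpl. ring.
  - rewrite prodR_map_one; [ring |]. intros x _.
    destruct (Nat.eqb_spec x h) as [-> | _].
    + rewrite Eh. reflexivity.
    + destruct (mem S x); reflexivity.
Qed.

(* Once the hub is influenced, it influences every node in the next step. *)
Lemma star_trans S S' :
  trans star_instance (star_truth h) S S' =
  prodR (map (fun y => if Bool.eqb (mem S' y) (mem S y || mem S h) then 1 else 0)
             (seq 0 n)).
Proof.
  unfold trans. cbn [inst_n star_instance]. f_equal. apply map_ext_in.
  intros y Hy. apply in_seq in Hy. rewrite star_q by lia.
  destruct (mem S y), (mem S' y), (mem S h); simpl; lra.
Qed.

Lemma star_step_size S :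
  expected_size (step star_instance (star_truth h) [(S, 1)]) =
  INR (length (filter (fun b => b)
                      (map (fun y => (mem S y || mem S h)%bool) (seq 0 n)))).
Proof.
  unfold step, expected_size. cbn [flat_map inst_n star_instance fst snd].
  rewrite app_nil_r, map_map. cbn [fst snd].
  erewrite map_ext.
  - exact (sumR_all_subsets_indicator n (fun y => (mem S y || mem S h)%bool)
             (fun s => INR (length (filter (fun b => b) s)))).
  - intros s. cbn beta. rewrite star_trans. ring.
Qed.

Definition star_payoff (A : list nat) : R :=
  expected_size (step star_instance (star_truth h)
                      [(add_choice n (repeat false n) A, 1)]).

Lemma star_value next :
  value star_instance (star_truth h) next =
  sumR (map (fun aw => snd aw * star_payoff (fst aw)) (next [])).
Proof. reflexivity. Qed.

Lemma star_payoff_le A : star_payoff A <= INR n.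
Proof.
  unfold star_payoff. rewrite star_step_size. apply le_INR.
  eapply Nat.le_trans; [apply filter_length_le |].
  rewrite length_map, length_seq. lia.
Qed.

Lemma star_payoff_one a :
  (a < n)%nat -> star_payoff [a] = if Nat.eqb a h then INR n else 1.
Proof.
  intros Ha. unfold star_payoff. rewrite star_step_size.
  rewrite (mem_add_choice _ _ _ h h_lt_n), mem_repeat_false. cbn [orb inb existsb].
  rewrite orb_false_r, (Nat.eqb_sym h a).
  destruct (Nat.eqb_spec a h) as [-> | Hne].
  - rewrite (map_ext_in _ (fun _ => true)) by (intros; apply orb_true_r).
    rewrite filter_map_swap, filter_true, !length_map, length_seq. reflexivity.
  - rewrite (map_ext_in _ (Nat.eqb a)).
    + rewrite filter_map_swap, length_map, length_filter_eqb_NoDup.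
      * reflexivity.
      * apply seq_NoDup.
      * apply in_seq. lia.
    + intros y Hy. apply in_seq in Hy.
      rewrite mem_add_choice, mem_repeat_false by lia. cbn [orb inb existsb].
      rewrite !orb_false_r. apply Nat.eqb_sym.
Qed.

Lemma star_full_values_lub :
  is_lub (full_values star_instance (star_truth h)) (INR n).
Proof.
  split.
  - intros v [next [Hnext ->]]. rewrite star_value.
    destruct (Hnext []) as [Hd Hsum].
    eapply Rle_trans.
    + apply sumR_weighted_le with (c := INR n).
      * eapply Forall_impl; [| exact Hd]. intros aw [_ Hw]. exact Hw.
      * intros aw _. apply star_payoff_le.
    + change (sumR (map snd (next [])) = 1) in Hsum. rewrite Hsum. lra.
  - intros b Hb. apply Hb. exists (fun _ => [([h], 1)]). split.
    + intros cs. split.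
      * repeat constructor; cbn; auto; lra.
      * simpl. ring.
    + rewrite star_value. cbn [map fst snd].
      rewrite star_payoff_one, Nat.eqb_refl by exact h_lt_n.
      unfold sumR; simpl. ring.
Qed.

Lemma star_value_one_node next :
  valid_dist n 1 (next []) ->
  value star_instance (star_truth h) next =
  1 + (INR n - 1) * choice_weight (next []) h.
Proof.
  intros [Hd Hsum]. change (sumR (map snd (next [])) = 1) in Hsum.
  rewrite star_value. unfold choice_weight.
  rewrite <- sumR_map_scal, <- Hsum at 1. rewrite <- sumR_map_plus.
  f_equal. apply map_ext_in. intros aw Haw. rewrite Forall_forall in Hd.
  destruct (Hd aw Haw) as [Hchoice _].
  destruct (valid_choice_one _ _ Hchoice) as [a [Ha Han]].
  rewrite Ha, star_payoff_one by assumption. cbn [hd].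
  destruct (Nat.eqb a h); ring.
Qed.

End Star.

Lemma exists_nat_gt (r : R) : exists n : nat, (1 <= n)%nat /\ r < INR n.
Proof.
  destruct (archimed (Rmax r 0)) as [Hup _].
  exists (S (Z.to_nat (up (Rmax r 0)))). split; [lia |].
  rewrite S_INR, INR_IZR_INZ, Z2Nat.id.
  - pose proof (Rmax_l r 0). lra.
  - apply le_IZR. pose proof (Rmax_r r 0). simpl. lra.
Qed.

Lemma exists_Rpower_gt c eps :
  0 < c -> 0 < eps -> exists n : nat, (1 <= n)%nat /\ c < Rpower (INR n) eps.
Proof.
  intros Hc Heps.
  destruct (exists_nat_gt (Rpower c (/ eps))) as [n [Hn Hlt]].
  exists n. split; [exact Hn |].
  replace c with (Rpower (Rpower c (/ eps)) eps) at 1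
    by (rewrite Rpower_mult, Rinv_l, Rpower_1; lra).
  apply Rlt_Rpower_l; [exact Heps |].
  split; [apply exp_pos | exact Hlt].
Qed.

Theorem theorem1 :
  forall eps : R, 0 < eps ->
  forall pol : policy, valid_policy pol ->
  exists (I : instance) (g : nat -> nat -> bool),
    wf_inst I /\ is_truth I g /\
    exists OPT_full : R,
      is_lub (full_values I g) OPT_full /\
      value I g (dime_next pol I g) < Rpower (INR (inst_n I)) (-1 + eps) * OPT_full.
Proof.
  intros eps Heps pol Hpol.
  destruct (exists_Rpower_gt 2 eps) as [n [Hn Hlarge]]; [lra | exact Heps |].
  assert (Hwf : wf_inst (star_instance n)) by (apply star_instance_wf; exact Hn).
  pose proof (Hpol _ [] Hwf) as Hd. set (d := pol (star_instance n) []) in Hd.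
  destruct (exists_rare_choice n d Hn Hd) as [h [Hh Hrare]].
  exists (star_instance n), (star_truth n h).
  split; [exact Hwf | split; [apply star_truth_is_truth; exact Hh |]].
  exists (INR n). split; [apply star_full_values_lub; exact Hh |].
  rewrite (star_value_one_node n h Hh _ Hd).
  change (dime_next pol (star_instance n) (star_truth n h) []) with d.
  cbn [inst_n star_instance].
  assert (Hpos : 0 < INR n) by (apply lt_0_INR; lia).
  replace (Rpower (INR n) (-1 + eps) * INR n) with (Rpower (INR n) eps)
    by (rewrite <- (Rpower_1 (INR n)) at 3 by exact Hpos;
        rewrite <- Rpower_plus; f_equal; ring).
  assert (Hn1 : 1 <= INR n) by (apply (le_INR 1); exact Hn).
  assert ((INR n - 1) * choice_weight d h <= (INR n - 1) * (1 / INR n))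
    by (apply Rmult_le_compat_l; lra).
  assert ((INR n - 1) * (1 / INR n) < 1).
  { replace ((INR n - 1) * (1 / INR n)) with (1 - 1 / INR n) by (field; lra).
    assert (0 < 1 / INR n) by (apply Rdiv_lt_0_compat; lra). lra. }
  lra.
Qed.
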